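(* Assume $\Phi$ is an involution. Let $\overline\pi\in\arg\min_{\pi\in\mathcal{C}_{\mathrm{coh}}\cap\Pi}\mathbb{E}_{x\sim\mathcal{D}_{\mathcal{X}}}[\mathsf{B}_F(\pi(x)\parallel\pi^*(x))]$ be the Bregman projection of $\pi^*$ onto $\mathcal{C}_{\mathrm{coh}}\cap\Pi$ and $\epsilon=\mathbb{E}_{x\sim\mathcal{D}_{\mathcal{X}}}[\mathsf{B}_F(\pi^*(x)\parallel\overline\pi(x))]$. Let $\widehat\pi$ be the solution of $\min_{\pi\in\mathcal{C}_{\mathrm{coh}}\cap\Pi}\mathbb{E}_{x\sim\mathcal{D}_{\mathcal{X}}}[\mathsf{B}_F(\pi(x)\parallel\pi_0(x))]$. Then (all expectations over $x\sim\mathcal{D}_{\mathcal{X}}$) $$\mathbb{E}[\mathsf{B}_F(\pi^*(x)\parallel\widehat\pi(x))]-\mathbb{E}[\mathsf{B}_F(\pi^*(x)\parallel\pi_0(x))]\le-\mathbb{E}[\mathsf{B}_F(\widehat\pi(x)\parallel\pi_0(x))]+\mathbb{E}\big[\langle\pi^*(x)-\overline\pi(x),\nabla F(\pi_0(x))-\nabla F(\widehat\pi(x))\rangle\big].$$ If $F$ is $\mu$-strongly convex with respect to a norm $\|\cdot\|$ (dual norm $\|\cdot\|_*$), then $$\mathbb{E}[\mathsf{B}_F(\pi^*(x)\parallel\widehat\pi(x))]-\mathbb{E}[\mathsf{B}_F(\pi^*(x)\parallel\pi_0(x))]\le-\mathbb{E}[\mathsf{B}_F(\widehat\pi(x)\parallel\pi_0(x))]+\sqrt{\tfrac{2\epsilon}{\mu}}\sqrt{\mathbb{E}\big[\|\nabla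 F(\pi_0(x))-\nabla F(\widehat\pi(x))\|_*^2\big]}.$$ If furthermore $F$ is $L$-smooth, then with $D=\mathbb{E}[\mathsf{B}_F(\widehat\pi(x)\parallel\pi_0(x))]$, $$\mathbb{E}[\mathsf{B}_F(\pi^*(x)\parallel\widehat\pi(x))]-\mathbb{E}[\mathsf{B}_F(\pi^*(x)\parallel\pi_0(x))]\le-D+\frac{2L}{\mu}\sqrt{\epsilon D},$$ and the right-hand side is strictly negative whenever $\epsilon<\big(\frac{\mu}{2L}\big)^2D$.
   Context: $\mathcal{X},\mathcal{Y}$ finite; models are maps $\pi\colon\mathcal{X}\to\Delta(\mathcal{Y})$, $\Pi_{\mathrm{all}}=\Delta(\mathcal{Y})^{\mathcal{X}}$; $\Pi\subseteq\Pi_{\mathrm{all}}$ closed and convex; $\pi_0\in\Pi_{\mathrm{all}}$ baseline; $\pi^*\colon\mathcal{X}\to\Delta(\mathcal{Y})$ a reference model (not assumed coherent); $\mathcal{D}_{\mathcal{X}}$ a full-support distribution on $\mathcal{X}$. $\Phi\colon\mathcal{X}\to\mathcal{X}$ and $\mathcal{C}_{\mathrm{coh}}=\{\pi\in\Pi_{\mathrm{all}}:\pi(x)=\pi(\Phi(x))\ \forall x\}$. $F$ is convex, differentiable on the interior of its domain (which contains $\Delta(\mathcal{Y})$, all relevant values lying where $\nabla F$ is defined), $\mathsf{B}_F(p\parallel q)=F(p)-F(q)-\langle\nabla F(q),p-q\rangle$. $\mu$-strong convexity: $\mathsf{B}_F(p\parallel q)\ge\frac{\mu}{2}\|p-q\|^2$;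 $L$-smoothness: $\|\nabla F(p)-\nabla F(q)\|_*\le L\|p-q\|$. *)

From HB Require Import structures.
From mathcomp Require Import all_boot all_order all_algebra.
From mathcomp Require Import all_classical all_reals all_analysis.
Set Implicit Arguments. Unset Strict Implicit. Unset Printing Implicit Defensive.
Import Order.TTheory GRing.Theory Num.Theory.
Import numFieldNormedType.Exports.
Local Open Scope classical_set_scope.
Local Open Scope ring_scope.

Section Defs.
Variables (R : realType) (n : nat).
Notation vec := 'rV[R]_n.

Definition dotv (p q : vec) : R := \sum_(i < n) p ord0 i * q ord0 i.

Definition simplex : set vec :=
  [set p | (forall i, 0 <= p ord0 i) /\ \sum_(i < n) p ord0 i = 1].

Definition bregman (F : vec -> R) (gF : vec -> vec) (p q : vec) : R :=
  F p - F q - dotv (gF q) (p - q).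

Definition convex_dom (A : set vec) : Prop :=
  forall p q t, A p -> A q -> 0 <= t <= 1 -> A (t *: p + (1 - t) *: q).

Definition convex_on (A : set vec) (F : vec -> R) : Prop :=
  forall p q t, A p -> A q -> 0 <= t <= 1 ->
    F (t *: p + (1 - t) *: q) <= t * F p + (1 - t) * F q.

Definition gradient_on (A : set vec) (F : vec -> R) (gF : vec -> vec) : Prop :=
  forall q, A q -> differentiable F q /\ forall v, 'd F q v = dotv (gF q) v.

Definition is_norm (nrm : vec -> R) : Prop :=
  (forall p, 0 <= nrm p) /\ (forall p, nrm p = 0 -> p = 0) /\
  (forall (a : R) p, nrm (a *: p) = `|a| * nrm p) /\
  (forall p q, nrm (p + q) <= nrm p + nrm q).

Definition dual_norm (nrm : vec -> R) (g : vec) : R :=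
  sup [set dotv g v | v in [set v | nrm v <= 1]].

End Defs.

Section Models.
Variables (R : realType) (X : finType) (n : nat).
Notation vec := 'rV[R]_n.
Notation model := (X -> vec).

Definition Pi_all : set model := [set pi | forall x, simplex (pi x)].

Definition C_coh (Phi : X -> X) : set model :=
  [set pi | forall x, pi x = pi (Phi x)].

Definition expect (DX : X -> R) (f : X -> R) : R := \sum_(x : X) DX x * f x.

Definition full_support_distr (DX : X -> R) : Prop :=
  (forall x, 0 < DX x) /\ \sum_(x : X) DX x = 1.

Definition convex_models (P : set model) : Prop :=
  forall p q t, P p -> P q -> 0 <= t <= 1 ->
    P (fun x => t *: p x + (1 - t) *: q x).

(* Closedness in the (finite-dimensional) product topology, sequentially. *)
Definition closed_models (P : set model) : Prop :=
  forall (u : nat -> model) (l : model), (forall k, P (u k)) ->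
    (forall x, (fun k => u k x) @ \oo --> l x) -> P l.

Definition is_argmin (A : set model) (G : model -> R) (p : model) : Prop :=
  A p /\ forall q, A q -> G p <= G q.

End Models.
Arguments Pi_all {R X n}.
Arguments simplex {R n}.

From HB Require Import structures.
From mathcomp Require Import all_boot all_order all_algebra.
From mathcomp Require Import all_classical all_reals all_analysis.
From mathcomp.algebra_tactics Require Import ring lra.
Set Implicit Arguments.
Unset Strict Implicit.
Unset Printing Implicit Defensive.
Import Order.TTheory GRing.Theory Num.Theory.
Import numFieldNormedType.Exports.
Local Open Scope classical_set_scope.
Local Open Scope ring_scope.

(* The three-point identity of Bregman divergences gives
     E B(pi*|pihat) - E B(pi*|pi0)
       = - D + E<pi* - pibar, gF pi0 - gF pihat> - E<gF pihat - gF pi0, pibar - pihat>,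
   and the last expectation is nonnegative: it is the derivative at pihat, in the
   direction of the feasible model pibar, of the objective that pihat minimises over
   the convex set C_coh `&` Pi.  Bounding the pairing by the dual norm and applying
   Cauchy-Schwarz in L2(DX), the cross term is at most
   sqrt(E nrm(pi* - pibar)^2) * sqrt(E dual(gF pi0 - gF pihat)^2); strong convexity turns
   the first factor into sqrt(2 eps / mu), and with L-smoothness the second into
   L sqrt(2 D / mu). *)

Section Pairing.
Variables (R : realType) (n : nat).
Implicit Types (g p q v : 'rV[R]_n) (a : R).

Lemma dotvC p q : dotv p q = dotv q p.
Proof. by apply: eq_bigr => i _; rewrite mulrC. Qed.

Lemma dotvDr g p q : dotv g (p + q) = dotv g p + dotv g q.
Proof. by rewrite /dotv -big_split; apply: eq_bigr => i _; rewrite !mxE mulrDr. Qed.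

Lemma dotvBr g p q : dotv g (p - q) = dotv g p - dotv g q.
Proof. by rewrite /dotv -sumrB; apply: eq_bigr => i _; rewrite !mxE mulrBr. Qed.

Lemma dotvBl g p q : dotv (p - q) g = dotv p g - dotv q g.
Proof. by rewrite dotvC dotvBr !(dotvC g). Qed.

Lemma dotvZr g a v : dotv g (a *: v) = a * dotv g v.
Proof. by rewrite /dotv mulr_sumr; apply: eq_bigr => i _; rewrite mxE mulrCA. Qed.

Lemma dotv0r g : dotv g 0 = 0.
Proof. by rewrite -(scale0r 0) dotvZr mul0r. Qed.

Lemma coord_le_mx_norm v i : `|v ord0 i| <= `|v|.
Proof.
have -> : `|v| = mx_norm v by [].
by rewrite mx_normrE; exact: (le_bigmax _ _ (ord0, i)).
Qed.

Lemma dotv_le_mx_norm g v : dotv g v <= (\sum_(i < n) `|g ord0 i|) * `|v|.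
Proof.
rewrite mulr_suml; apply: le_trans (ler_norm _) _.
apply: le_trans (ler_norm_sum _ _ _) _; apply: ler_sum => i _.
by rewrite normrM ler_wpM2l // coord_le_mx_norm.
Qed.

End Pairing.

Lemma bregman_three_point (R : realType) n (F : 'rV[R]_n -> R) gF (a b h p : 'rV[R]_n) :
  bregman F gF a h - bregman F gF a p =
  - bregman F gF h p + dotv (a - b) (gF p - gF h) - dotv (gF h - gF p) (b - h).
Proof.
rewrite /bregman !(dotvBr, dotvBl) ![dotv a _]dotvC ![dotv b _]dotvC; ring.
Qed.

Section NormOnRows.
Variables (R : realType) (n : nat) (nrm : 'rV[R]_n -> R).
Hypothesis nrm_norm : is_norm nrm.

Let nrm_ge0 v : 0 <= nrm v. Proof. by case: nrm_norm. Qed.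
Let nrm_eq0 v : nrm v = 0 -> v = 0. Proof. by case: nrm_norm => _ [/(_ v)]. Qed.
Let nrmZ a v : nrm (a *: v) = `|a| * nrm v. Proof. by case: nrm_norm => _ [_ [/(_ a v)]]. Qed.
Let nrmD u v : nrm (u + v) <= nrm u + nrm v. Proof. by case: nrm_norm => _ [_ [_ /(_ u v)]]. Qed.

Lemma nrm0 : nrm 0 = 0.
Proof. by rewrite -(scale0r 0) nrmZ normr0 mul0r. Qed.

Lemma nrmN v : nrm (- v) = nrm v.
Proof. by rewrite -scaleN1r nrmZ normrN normr1 mul1r. Qed.

Lemma nrm_sum (I : Type) (r : seq I) (f : I -> 'rV[R]_n) :
  nrm (\sum_(i <- r) f i) <= \sum_(i <- r) nrm (f i).
Proof.
elim: r => [|a r IH]; first by rewrite !big_nil nrm0.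
by rewrite !big_cons; apply: le_trans (nrmD _ _) _; exact: lerD.
Qed.

Lemma nrm_le_mx_norm : exists2 C, 0 <= C & forall v, nrm v <= C * `|v|.
Proof.
exists (\sum_(i < n) nrm (delta_mx ord0 i)) => [|v]; first exact: sumr_ge0.
rewrite {1}(matrix_sum_delta v) big_ord1 mulr_suml.
apply: le_trans (nrm_sum _ _) _; apply: ler_sum => i _.
by rewrite nrmZ mulrC ler_wpM2l // coord_le_mx_norm.
Qed.

Lemma nrm_continuous : continuous nrm.
Proof.
have [C C0 nrmC] := nrm_le_mx_norm.
have C1 : 0 < C + 1 by rewrite ltr_wpDl.
move=> u; apply/(@cvgrPdist_le _ _ _ _ (nbhs_filter u)) => e e0.
near=> v.
have uv : `|u - v| <= e / (C + 1).
  near: v; have : (fun v => v) @ u --> u := cvg_id.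
  by move/cvgrPdist_le; apply; exact: divr_gt0.
have lip : `|nrm u - nrm v| <= nrm (u - v).
  have := nrmD (u - v) v; have := nrmD (v - u) u.
  rewrite !subrK -opprB nrmN ler_norml => *; apply/andP; split; lra.
apply: le_trans lip (le_trans (nrmC _) _).
rewrite -[e](mulfK (lt0r_neq0 C1)) mulrC mulrAC ler_pM // lerDl.
Unshelve. all: by end_near. Qed.

(* Equivalence of norms in finite dimension: [nrm] attains a positive minimum
   on the compact unit sphere of the sup norm. *)
Lemma mx_norm_le_nrm : exists2 c, 0 < c & forall v, c * `|v| <= nrm v.
Proof.
pose S := [set v : 'rV[R]_n | `|v| = 1].
have unitS v : v != 0 -> S (`|v|^-1 *: v).
  by move=> v0; rewrite /S /= normrZ normfV normr_id mulVf // normr_eq0.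
have [S0|S_empty] := pselect (S !=set0); last first.
  exists 1 => // v; rewrite mul1r.
  have [->|v0] := eqVneq v 0; first by rewrite normr0 nrm_ge0.
  by case: S_empty; exists (`|v|^-1 *: v); exact: unitS.
have Sc : compact S.
  apply: bounded_closed_compact.
    by exists 1; split => // M M1 x /= ->; exact: ltW.
  exact: (continuous_closedP _).1 (@norm_continuous R 'rV[R]_n) _ (@closed_eq R 1).
have [w Sw wmin] := EVT_min_rV S0 Sc (continuous_subspaceT nrm_continuous).
have w1 : `|w| = 1 by move: Sw; rewrite inE.
have nw0 : 0 < nrm w.
  rewrite lt_def nrm_ge0 andbT; apply: contra_neq (oner_neq0 R) => /nrm_eq0 w0.
  by rewrite -w1 w0 normr0.
exists (nrm w) => // v.
have [->|v0] := eqVneq v 0; first by rewrite normr0 mulr0 nrm_ge0.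
have := wmin _ (mem_set (unitS v v0)).
by rewrite nrmZ normfV normr_id ler_pdivlMl ?normr_gt0 // mulrC.
Qed.

Lemma dual_norm_has_sup g : has_sup [set dotv g v | v in [set v | nrm v <= 1]].
Proof.
have [c c0 cnrm] := mx_norm_le_nrm.
split; first by exists 0, 0 => //=; rewrite ?nrm0 ?dotv0r.
exists ((\sum_(i < n) `|g ord0 i|) / c) => _ [v /= v1 <-].
apply: le_trans (dotv_le_mx_norm g v) _; apply: ler_wpM2l; first exact: sumr_ge0.
by rewrite -[c^-1]mul1r ler_pdivlMr // mulrC (le_trans (cnrm v)).
Qed.

Lemma dual_norm_ge0 g : 0 <= dual_norm nrm g.
Proof.
apply: sup_upper_bound; first exact: dual_norm_has_sup.
by exists 0; rewrite /= ?nrm0 ?dotv0r.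
Qed.

Lemma dotv_le_dual_norm g v : dotv g v <= dual_norm nrm g * nrm v.
Proof.
have [->|v0] := eqVneq v 0; first by rewrite dotv0r nrm0 mulr0.
have nv0 : 0 < nrm v.
  by rewrite lt_def nrm_ge0 andbT; apply/eqP => /nrm_eq0; apply/eqP.
rewrite -ler_pdivrMr // mulrC -dotvZr.
apply: sup_upper_bound; first exact: dual_norm_has_sup.
exists ((nrm v)^-1 *: v) => //=.
by rewrite nrmZ ger0_norm ?invr_ge0 // mulVf // gt_eqF.
Qed.

End NormOnRows.

Section Expectation.
Variables (R : realType) (X : finType) (w : X -> R).
Hypothesis w_ge0 : forall x, 0 <= w x.
Implicit Types (f g a b : X -> R).

Lemma expectB f g : expect w (fun x => f x - g x) = expect w f - expect w g.
Proof. by rewrite /expect -sumrB; apply: eq_bigr => x _; rewrite mulrBr. Qed.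

Lemma expect_ge0 f : (forall x, 0 <= f x) -> 0 <= expect w f.
Proof. by move=> f_ge0; apply: sumr_ge0 => x _; rewrite mulr_ge0. Qed.

Lemma ler_expect f g : (forall x, f x <= g x) -> expect w f <= expect w g.
Proof. by move=> fg; apply: ler_sum => x _; rewrite ler_wpM2l. Qed.

Lemma expectZ (c : R) f : expect w (fun x => c * f x) = c * expect w f.
Proof. by rewrite /expect mulr_sumr; apply: eq_bigr => x _; rewrite mulrCA. Qed.

Lemma expect_cauchy_schwarz_sqr a b :
  expect w (fun x => a x * b x) ^+ 2 <=
  expect w (fun x => a x ^+ 2) * expect w (fun x => b x ^+ 2).
Proof.
set A := expect w (fun x => a x ^+ 2); set B := expect w (fun x => b x ^+ 2).
set C := expect w (fun x => a x * b x).
(* discriminant of the nonnegative quadratic [t |-> E[(t a - b)^2]] *)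
have quad_ge0 t : 0 <= expect w (fun x => (t * a x - b x) ^+ 2).
  by apply: expect_ge0 => x; exact: sqr_ge0.
have quadE t : expect w (fun x => (t * a x - b x) ^+ 2) = t ^+ 2 * A - 2 * t * C + B.
  rewrite /A /B /C /expect !mulr_sumr -sumrB -big_split /=.
  by apply: eq_bigr => y _; ring.
have A_ge0 : 0 <= A by apply: expect_ge0 => x; exact: sqr_ge0.
have [A0|A_neq0] := eqVneq A 0.
  have [->|C_neq0] := eqVneq C 0; first by rewrite A0 expr0n mul0r.
  have := quad_ge0 ((B + 1) / (2 * C)); rewrite quadE A0.
  have -> : ((B + 1) / (2 * C)) ^+ 2 * 0 - 2 * ((B + 1) / (2 * C)) * C + B = -1.
    by field.
  by rewrite oppr_ge0 ler10.
have := quad_ge0 (C / A); rewrite quadE.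
have A_gt0 : 0 < A by rewrite lt_def A_neq0.
have -> : (C / A) ^+ 2 * A - 2 * (C / A) * C + B = B - C ^+ 2 / A.
  by field.
by rewrite subr_ge0 ler_pdivrMr // mulrC.
Qed.

Lemma expect_cauchy_schwarz a b :
  expect w (fun x => a x * b x) <=
  Num.sqrt (expect w (fun x => a x ^+ 2)) * Num.sqrt (expect w (fun x => b x ^+ 2)).
Proof.
rewrite -sqrtrM; last by apply: expect_ge0 => x; exact: sqr_ge0.
apply: le_trans (ler_norm _) _; rewrite -sqrtr_sqr ler_sqrt.
  exact: expect_cauchy_schwarz_sqr.
by rewrite mulr_ge0 //; apply: expect_ge0 => x; exact: sqr_ge0.
Qed.

End Expectation.

Lemma convex_models_C_coh_setI (R : realType) (X : finType) n (Phi : X -> X)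
    (P : set (X -> 'rV[R]_n)) :
  convex_models P -> convex_models (C_coh Phi `&` P).
Proof.
move=> P_cvx p q t [p_coh Pp] [q_coh Pq] t01; split; last exact: P_cvx.
by move=> x /=; rewrite p_coh q_coh.
Qed.

Section FirstOrderOptimality.
Variables (R : realType) (n : nat) (dom : set 'rV[R]_n).
Variables (F : 'rV[R]_n -> R) (gF : 'rV[R]_n -> 'rV[R]_n).
Hypothesis gradF : gradient_on (interior dom) F gF.

Lemma gradient_difference_quotient q v : interior dom q ->
  t^-1 * (F (t *: v + q) - F q) @[t --> 0^'] --> dotv (gF q) v.
Proof.
move=> q_int; have [dFq dFqE] := gradF q_int.
have := @diff_derivable _ _ _ _ _ v dFq; rewrite /derivable -/(derive _ _ _) deriveE //.
by rewrite dFqE.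
Qed.

Lemma argmin_expect_bregman_first_order (X : finType) (w : X -> R)
    (A : set (X -> 'rV[R]_n)) (p0 ph pb : X -> 'rV[R]_n) :
  (forall x, 0 <= w x) -> convex_models A -> (forall x, interior dom (ph x)) ->
  A pb -> is_argmin A (fun pi => expect w (fun x => bregman F gF (pi x) (p0 x))) ph ->
  0 <= expect w (fun x => dotv (gF (ph x) - gF (p0 x)) (pb x - ph x)).
Proof.
move=> w_ge0 A_cvx ph_int A_pb [A_ph ph_min].
pose v x := pb x - ph x.
pose c x := dotv (gF (p0 x)) (v x).
pose q t := \sum_x w x * (t^-1 * (F (t *: v x + ph x) - F (ph x)) - c x).
have q_cvg : q t @[t --> 0^'+] --> \sum_x w x * (dotv (gF (ph x)) (v x) - c x).
  have right_punctured : (0 : R)^'+ `=>` (0 : R)^'.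
    by apply: within_subset => // t; exact: lt0r_neq0.
  apply: cvg_trans (cvg_app q right_punctured) _.
  apply: cvg_big => [|x _]; first exact: add_continuous.
  apply: cvgM; first exact: cvg_cst.
  apply: cvgB (cvg_cst _).
  exact: gradient_difference_quotient.
have q_ge0 t : 0 < t <= 1 -> 0 <= q t.
  case/andP=> t_gt0 t_le1; have t01 : 0 <= t <= 1 by rewrite ltW.
  have := ph_min _ (A_cvx _ _ t A_pb A_ph t01).
  rewrite -subr_ge0 -expectB => gap_ge0.
  have -> : q t = t^-1 * expect w (fun x =>
      bregman F gF (t *: pb x + (1 - t) *: ph x) (p0 x) - bregman F gF (ph x) (p0 x)).
    rewrite /q /expect mulr_sumr; apply: eq_bigr => x _.
    have -> : t *: pb x + (1 - t) *: ph x = t *: v x + ph x.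
      by apply/matrixP => i j; rewrite !mxE; ring.
    rewrite /bregman /c /v !(dotvBr, dotvDr, dotvZr); field; exact: lt0r_neq0.
  by rewrite mulr_ge0 // invr_ge0 ltW.
have -> : expect w (fun x => dotv (gF (ph x) - gF (p0 x)) (pb x - ph x)) =
    \sum_x w x * (dotv (gF (ph x)) (v x) - c x).
  by apply: eq_bigr => x _; rewrite dotvBl.
apply: cvgr_to_ge q_cvg _; near=> t; apply: q_ge0; apply/andP; split; near: t.
  exact: nbhs_right_gt.
exact: nbhs_right_le ltr01.
Unshelve. all: by end_near. Qed.

End FirstOrderOptimality.

Lemma expect_bregman_three_point (R : realType) (X : finType) n (w : X -> R)
    (F : 'rV[R]_n -> R) gF (ps pb ph p0 : X -> 'rV[R]_n) :
  expect w (fun x => bregman F gF (ps x) (ph x)) -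
    expect w (fun x => bregman F gF (ps x) (p0 x)) =
  - expect w (fun x => bregman F gF (ph x) (p0 x)) +
    expect w (fun x => dotv (ps x - pb x) (gF (p0 x) - gF (ph x))) -
    expect w (fun x => dotv (gF (ph x) - gF (p0 x)) (pb x - ph x)).
Proof.
rewrite -!expectB /expect -sumrN -big_split -sumrB /=; apply: eq_bigr => x _.
by rewrite (bregman_three_point _ _ _ (pb x)); ring.
Qed.

Section StrongConvexity.
Variables (R : realType) (n : nat) (dom : set 'rV[R]_n).
Variables (F : 'rV[R]_n -> R) (gF : 'rV[R]_n -> 'rV[R]_n).
Variables (nrm : 'rV[R]_n -> R) (mu : R).
Hypotheses (nrm_norm : is_norm nrm) (mu_gt0 : 0 < mu).
Hypothesis F_strong : forall p q, dom p -> interior dom q ->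
  mu / 2 * nrm (p - q) ^+ 2 <= bregman F gF p q.

Lemma bregman_ge0 p q : dom p -> interior dom q -> 0 <= bregman F gF p q.
Proof.
move=> p_dom q_int; apply: le_trans (F_strong p_dom q_int).
by rewrite mulr_ge0 ?sqr_ge0 // divr_ge0 // ltW.
Qed.

Lemma sqr_nrm_le_bregman p q : dom p -> interior dom q ->
  nrm (p - q) ^+ 2 <= 2 / mu * bregman F gF p q.
Proof.
move=> p_dom q_int; rewrite -ler_pdivrMl ?divr_gt0 // invf_div.
exact: F_strong.
Qed.

Variables (X : finType) (w : X -> R).
Hypothesis w_ge0 : forall x, 0 <= w x.

Lemma expect_dotv_le_sqrt_bregman (p q g : X -> 'rV[R]_n) :
  (forall x, dom (p x)) -> (forall x, interior dom (q x)) ->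
  expect w (fun x => dotv (p x - q x) (g x)) <=
  Num.sqrt (2 * expect w (fun x => bregman F gF (p x) (q x)) / mu) *
    Num.sqrt (expect w (fun x => dual_norm nrm (g x) ^+ 2)).
Proof.
move=> p_dom q_int.
apply: le_trans (_ : _ <= expect w (fun x => nrm (p x - q x) * dual_norm nrm (g x))) _.
  by apply: ler_expect => // x; rewrite dotvC mulrC; exact: dotv_le_dual_norm.
apply: le_trans (expect_cauchy_schwarz w_ge0 _ _) _.
apply: ler_wpM2r; first exact: sqrtr_ge0.
have E_ge0 : 0 <= expect w (fun x => bregman F gF (p x) (q x)).
  by apply: expect_ge0 => // x; exact: bregman_ge0.
rewrite ler_sqrt ?divr_ge0 ?mulr_ge0 ?(ltW mu_gt0) // mulrAC -expectZ.
by apply: ler_expect => // x; exact: sqr_nrm_le_bregman.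
Qed.

Variable L : R.
Hypothesis L_gt0 : 0 < L.
Hypothesis gF_lipschitz : forall p q, interior dom p -> interior dom q ->
  dual_norm nrm (gF p - gF q) <= L * nrm (p - q).

Lemma expect_sqr_dual_grad_le (p q : X -> 'rV[R]_n) :
  (forall x, interior dom (p x)) -> (forall x, interior dom (q x)) ->
  expect w (fun x => dual_norm nrm (gF (q x) - gF (p x)) ^+ 2) <=
  L ^+ 2 * (2 / mu * expect w (fun x => bregman F gF (p x) (q x))).
Proof.
move=> p_int q_int; rewrite -!expectZ; apply: ler_expect => // x.
apply: le_trans (_ : _ <= (L * nrm (p x - q x)) ^+ 2) _.
  have nrm_ge0 : 0 <= nrm (p x - q x) by case: nrm_norm.
  rewrite lerXn2r ?nnegrE ?dual_norm_ge0 ?mulr_ge0 ?(ltW L_gt0) //.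
  by rewrite -(nrmN nrm_norm) opprB; exact: gF_lipschitz.
rewrite exprMn ler_wpM2l ?sqr_ge0 //.
exact: sqr_nrm_le_bregman (interior_subset (p_int x)) (q_int x).
Qed.

Lemma sqrt_expect_sqr_dual_grad_le (e : R) (p q : X -> 'rV[R]_n) : 0 <= e ->
  (forall x, interior dom (p x)) -> (forall x, interior dom (q x)) ->
  Num.sqrt (2 * e / mu) *
    Num.sqrt (expect w (fun x => dual_norm nrm (gF (q x) - gF (p x)) ^+ 2)) <=
  2 * L / mu * Num.sqrt (e * expect w (fun x => bregman F gF (p x) (q x))).
Proof.
move=> e_ge0 p_int q_int.
set D := expect w (fun x => bregman F gF (p x) (q x)).
have D_ge0 : 0 <= D.
  by apply: expect_ge0 => // x; apply: bregman_ge0 (interior_subset (p_int x)) (q_int x).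
apply: le_trans (_ : _ <= Num.sqrt (2 * e / mu) * Num.sqrt (L ^+ 2 * (2 / mu * D))) _.
  by rewrite ler_wpM2l ?sqrtr_ge0 // ler_sqrt ?expect_sqr_dual_grad_le //
    mulr_ge0 ?sqr_ge0 // mulr_ge0 // divr_ge0 // ltW.
rewrite -sqrtrM ?divr_ge0 ?mulr_ge0 ?(ltW mu_gt0) //.
have -> : 2 * e / mu * (L ^+ 2 * (2 / mu * D)) = (2 * L / mu) ^+ 2 * (e * D) by ring.
rewrite sqrtrM ?sqr_ge0 // sqrtr_sqr ger0_norm //.
by rewrite divr_ge0 ?mulr_ge0 ?(ltW mu_gt0) ?(ltW L_gt0).
Qed.

End StrongConvexity.

Lemma neg_add_sqrt_lt0 (R : rcfType) (k e D : R) : 0 < k -> 0 <= e ->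
  e < k^-1 ^+ 2 * D -> - D + k * Num.sqrt (e * D) < 0.
Proof.
move=> k_gt0 e_ge0 e_lt.
have D_gt0 : 0 < D.
  by have := le_lt_trans e_ge0 e_lt; rewrite pmulr_rgt0 // exprn_gt0 // invr_gt0.
have kD_gt0 : 0 < k^-1 * D by rewrite mulr_gt0 ?invr_gt0.
have : Num.sqrt (e * D) < k^-1 * D.
  rewrite -(ger0_norm (ltW kD_gt0)) -sqrtr_sqr ltr_sqrt ?exprn_gt0 //.
  by rewrite exprMn [D ^+ 2]expr2 mulrA ltr_pM2r.
rewrite -(ltr_pM2l k_gt0) mulrA mulfV ?gt_eqF // mul1r => ?; lra.
Qed.
Theorem theorem2 (R : realType) (X : finType) (n : nat)
  (DX : X -> R) (Phi : X -> X) (Pi : set (X -> 'rV[R]_n))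
  (pi0 pistar pibar pihat : X -> 'rV[R]_n)
  (dom : set 'rV[R]_n) (F : 'rV[R]_n -> R) (gF : 'rV[R]_n -> 'rV[R]_n) :
  full_support_distr DX ->
  (forall x, Phi (Phi x) = x) ->
  Pi `<=` Pi_all -> closed_models Pi -> convex_models Pi ->
  Pi_all pi0 -> (forall x, simplex (pistar x)) ->
  simplex `<=` dom -> convex_dom dom -> convex_on dom F ->
  gradient_on (interior dom) F gF ->
  (forall x, interior dom (pi0 x)) ->
  (forall x, interior dom (pibar x)) ->
  (forall x, interior dom (pihat x)) ->
  is_argmin (C_coh Phi `&` Pi)
    (fun pi => expect DX (fun x => bregman F gF (pi x) (pistar x))) pibar ->
  is_argmin (C_coh Phi `&` Pi)
    (fun pi => expect DX (fun x => bregman F gF (pi x) (pi0 x))) pihat ->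
  let eps := expect DX (fun x => bregman F gF (pistar x) (pibar x)) in
  let Dv := expect DX (fun x => bregman F gF (pihat x) (pi0 x)) in
  let lhs := expect DX (fun x => bregman F gF (pistar x) (pihat x))
             - expect DX (fun x => bregman F gF (pistar x) (pi0 x)) in
  (* first bound *)
  lhs <= - Dv + expect DX (fun x => dotv (pistar x - pibar x) (gF (pi0 x) - gF (pihat x)))
  /\
  (forall (nrm : 'rV[R]_n -> R) (mu : R), is_norm nrm -> 0 < mu ->
    (* mu-strong convexity of F w.r.t. nrm *)
    (forall p q, dom p -> interior dom q -> mu / 2 * nrm (p - q) ^+ 2 <= bregman F gF p q) ->
    lhs <= - Dv + Num.sqrt (2 * eps / mu) *
             Num.sqrt (expect DX (fun x => dual_norm nrm (gF (pi0 x) - gF (pihat x)) ^+ 2))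
    /\
    (forall L : R, 0 < L ->
      (* L-smoothness of F w.r.t. nrm *)
      (forall p q, interior dom p -> interior dom q ->
         dual_norm nrm (gF p - gF q) <= L * nrm (p - q)) ->
      lhs <= - Dv + 2 * L / mu * Num.sqrt (eps * Dv)
      /\ (eps < (mu / (2 * L)) ^+ 2 * Dv -> - Dv + 2 * L / mu * Num.sqrt (eps * Dv) < 0))).
Proof.
move=> [DX_gt0 _] _ _ _ Pi_cvx _ pistar_simplex simplex_dom _ _ gradF pi0_int pibar_int
  pihat_int [pibar_feasible _] pihat_min eps Dv lhs.
have DX_ge0 x : 0 <= DX x := ltW (DX_gt0 x).
have bound1 : lhs <= - Dv +
    expect DX (fun x => dotv (pistar x - pibar x) (gF (pi0 x) - gF (pihat x))).
  have := argmin_expect_bregman_first_order gradF DX_ge0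
    (convex_models_C_coh_setI Pi_cvx) pihat_int pibar_feasible pihat_min.
  by rewrite /lhs /Dv (@expect_bregman_three_point _ _ _ _ _ _ _ pibar); lra.
split=> // nrm mu nrm_norm mu_gt0 F_strong.
have pistar_dom x : dom (pistar x) := simplex_dom _ (pistar_simplex x).
have bound2 : lhs <= - Dv + Num.sqrt (2 * eps / mu) *
    Num.sqrt (expect DX (fun x => dual_norm nrm (gF (pi0 x) - gF (pihat x)) ^+ 2)).
  apply: le_trans bound1 _; rewrite lerD2l.
  exact: (expect_dotv_le_sqrt_bregman nrm_norm mu_gt0 F_strong DX_ge0 _
    pistar_dom pibar_int).
split=> // L L_gt0 gF_lipschitz.
have eps_ge0 : 0 <= eps.
  apply: expect_ge0 => // x.
  exact: (bregman_ge0 mu_gt0 F_strong (pistar_dom x) (pibar_int x)).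
split.
  apply: le_trans bound2 _; rewrite lerD2l.
  exact: (sqrt_expect_sqr_dual_grad_le nrm_norm mu_gt0 F_strong DX_ge0 L_gt0
    gF_lipschitz eps_ge0 pihat_int pi0_int).
by rewrite -invf_div; apply: neg_add_sqrt_lt0; rewrite // divr_gt0 ?mulr_gt0.
Qed.
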